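(* Let $x,y$ be non-commuting indeterminates and $C=xyx^{-1}y^{-1}$. Let $(R_n)_{n\in\mathbb Z}$ be the solution of $$R_{n+1}CR_{n-1}=R_n^2+1\qquad(n\in\mathbb Z)$$ with $R_0=yxy^{-1}$ and $R_1=y$. Then for all $n\ge 0$, $R_n$ is a Laurent polynomial in $x,y$ with only non-negative integer coefficients.
   Context: Work in the free skew field (non-commutative rational functions) over $\mathbb C$ generated by $x,y$. A Laurent polynomial in $x,y$ is a $\mathbb Z$-linear combination of words in $x^{\pm1},y^{\pm1}$. *)

(* The integral group ring Z[F(x,y)] of the free group on
   x, y (= Laurent polynomials in non-commuting x, y), built as formal
   integer combinations of words modulo free reduction. *)
From mathcomp Require Import all_boot all_order all_algebra.
Set Implicit Arguments. Unset Strict Implicit. Unset Printing Implicit Defensive.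
Import GRing.Theory Num.Theory.
Local Open Scope ring_scope.

(* A letter: (generator, inverted?) ; generator false = x, true = y. *)
Definition letter := (bool * bool)%type.
Definition word := seq letter.

Definition cancels (a b : letter) : bool := (a.1 == b.1) && (a.2 != b.2).

Fixpoint freduce (w : word) : word :=
  match w with
  | [::] => [::]
  | a :: s =>
      match freduce s with
      | b :: r => if cancels a b then r else a :: b :: r
      | [::] => [:: a]
      end
  end.

(* Laurent polynomial = formal Z-combination of words (a representative). *)
Definition lpoly := seq (int * word).

Definition lcoef (p : lpoly) (w : word) : int :=
  \sum_(e <- p | freduce e.2 == w) e.1.

(* equality in the group ring Z[F_2] *)
Definition leq_lp (p q : lpoly) : Prop := forall w, lcoef p w = lcoef q w.

Definition ladd (p q : lpoly) : lpoly := p ++ q.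
Definition lmul (p q : lpoly) : lpoly :=
  [seq (e.1 * f.1, e.2 ++ f.2) | e <- p, f <- q].
Definition lone : lpoly := [:: (1%:Z, [::])].
Definition lword (w : word) : lpoly := [:: (1%:Z, w)].

Definition X : letter := (false, false).
Definition Xi : letter := (false, true).
Definition Y : letter := (true, false).
Definition Yi : letter := (true, true).

Definition Cw : lpoly := lword [:: X; Y; Xi; Yi].

Definition nonneg_lp (p : lpoly) : Prop := forall w, 0 <= lcoef p w.

(** The sequence is produced by a two-state transfer scheme
      [r_(n+1) = r_n a + z_n],  [z_(n+1) = z_n b + r_(n+1) c]
    with the monomials [a = y x^-1], [b = x^2 y^-1 x^-1], [c = y^-1 x^-1], so
    every [r_n] is a sum of monomials and has non-negative coefficients.
    Eliminating [z] gives the linear recurrence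
    [r_(n+2) = r_(n+1) K - r_n E] with [K = a + b + c] and [E = a b = C^-1].
    Along any solution of this linear recurrence, two quadratic exchange
    relations propagate from one index to the next, and together with them so
    does [r_(n+2) C r_n = r_(n+1)^2 + 1]; it remains to check the three
    relations at [n = 0], which is a finite computation. *)
From mathcomp Require Import all_boot all_order all_algebra.
From mathcomp Require Import zify.
From Stdlib Require Import Setoid Morphisms.
Set Implicit Arguments. Unset Strict Implicit. Unset Printing Implicit Defensive.
Import GRing.Theory Num.Theory.

Section FreeReduction.

Definition push (a : letter) (w : word) : word :=
  if w is b :: r then (if cancels a b then r else a :: b :: r) else [:: a].

Lemma freduce_cons a s : freduce (a :: s) = push a (freduce s).
Proof. by []. Qed.

Fixpoint reduced (w : word) : bool :=
  if w is a :: ((b :: _) as s) then ~~ cancels a b && reduced s else true.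

Lemma reduced_behead a s : reduced (a :: s) -> reduced s.
Proof. by case: s => //= b s /andP[]. Qed.

Lemma reduced_push a w : reduced w -> reduced (push a w).
Proof.
case: w => [|b r] //= w_red; case: ifP => ab; first exact: reduced_behead w_red.
by rewrite /= ab w_red.
Qed.

Lemma reduced_freduce w : reduced (freduce w).
Proof. by elim: w => [|a s IH] //=; apply: (reduced_push a IH). Qed.

Lemma freduce_id w : reduced w -> freduce w = w.
Proof.
elim: w => [|a s IH] // w_red; rewrite freduce_cons IH; last exact: reduced_behead w_red.
by case: s w_red {IH} => [|b r] //= /andP[/negbTE -> _].
Qed.

Lemma cancels_trans a b c : cancels a b -> cancels b c -> a = c.
Proof. by case: a b c => [[] []] [[] []] [[] []]. Qed.

Lemma push_cancel a b s : cancels a b -> reduced s -> push a (push b s) = s.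
Proof.
move=> ab; case: s => [|c r] s_red; first by rewrite /push ab.
rewrite [push b _]/push; case bc: (cancels b c); last by rewrite /push ab.
rewrite -(cancels_trans ab bc) in s_red *.
by case: r s_red => [|d r] //= /andP[/negbTE -> _].
Qed.

Lemma freduce_cat u v : freduce (u ++ v) = foldr push (freduce v) u.
Proof. by elim: u => [|a u IH] //=; rewrite -IH. Qed.

Lemma reduced_foldr_push t u : reduced t -> reduced (foldr push t u).
Proof. by move=> t_red; elim: u => [|a u IH] //=; apply: reduced_push. Qed.

Lemma foldr_push_freduce t u : reduced t -> foldr push t u = foldr push t (freduce u).
Proof.
move=> t_red; elim: u => [|a u IH] //=; rewrite IH.
case: (freduce u) => [|b r] //=; case: ifP => // ab.
by apply: push_cancel => //; apply: reduced_foldr_push.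
Qed.

Lemma freduce_catl u v : freduce (u ++ v) = freduce (freduce u ++ v).
Proof. by rewrite !freduce_cat; apply/foldr_push_freduce/reduced_freduce. Qed.

Lemma freduce_catr u v : freduce (u ++ v) = freduce (u ++ freduce v).
Proof. by rewrite !freduce_cat (freduce_id (reduced_freduce v)). Qed.

End FreeReduction.

Section Coefficients.
Local Open Scope ring_scope.

Definition lneg (p : lpoly) : lpoly := [seq (- e.1, e.2) | e <- p].

Lemma lcoef_nil w : lcoef [::] w = 0.
Proof. by rewrite /lcoef big_nil. Qed.

Lemma lcoef_cons e p w :
  lcoef (e :: p) w = (if freduce e.2 == w then e.1 else 0) + lcoef p w.
Proof. by rewrite /lcoef big_cons; case: ifP; rewrite ?add0r. Qed.

Lemma lcoef_add p q w : lcoef (ladd p q) w = lcoef p w + lcoef q w.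
Proof. by rewrite /lcoef big_cat. Qed.

Lemma lcoef_neg p w : lcoef (lneg p) w = - lcoef p w.
Proof. by rewrite /lcoef big_map sumrN. Qed.

Lemma lcoef_mul p q w : lcoef (lmul p q) w =
  \sum_(e <- p) \sum_(f <- q) (if freduce (e.2 ++ f.2) == w then e.1 * f.1 else 0).
Proof. by rewrite /lcoef /lmul big_mkcond big_allpairs_dep. Qed.

Definition lpair (p : lpoly) (h : word -> int) : int :=
  \sum_(e <- p) e.1 * h (freduce e.2).

Lemma lpair_coef p h (s : seq word) : uniq s ->
  {subset [seq freduce e.2 | e <- p] <= s} ->
  lpair p h = \sum_(u <- s) lcoef p u * h u.
Proof.
move=> s_uniq p_sub; rewrite /lpair /lcoef.
under [RHS]eq_bigr => u _ do rewrite big_distrl big_mkcond /=.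
rewrite exchange_big /=; apply: eq_big_seq => e e_p.
have e_s : freduce e.2 \in s by apply: p_sub; apply: map_f.
rewrite (bigD1_seq (freduce e.2)) //= eqxx big1 ?addr0 // => u /negbTE.
by rewrite eq_sym => ->.
Qed.

Lemma lpair_cong p q h : leq_lp p q -> lpair p h = lpair q h.
Proof.
move=> pq; pose s := undup [seq freduce e.2 | e <- p ++ q].
have sub (r : lpoly) : {subset r <= p ++ q} -> {subset [seq freduce e.2 | e <- r] <= s}.
  by move=> r_sub _ /mapP[e /r_sub e_pq ->]; rewrite /s mem_undup; apply: map_f.
rewrite (@lpair_coef p h s) ?(@lpair_coef q h s) ?undup_uniq //.
- by apply: eq_bigr => u _; rewrite pq.
- by apply: sub => e e_q; rewrite mem_cat e_q orbT.
- by apply: sub => e e_p; rewrite mem_cat e_p.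
Qed.

(* By [freduce_catl], [lcoef (lmul r q) w] is the pairing of [r] with a
   function of reduced words, hence depends only on the coefficients of [r]. *)
Lemma lmul_congl p p' q : leq_lp p p' -> leq_lp (lmul p q) (lmul p' q).
Proof.
move=> pp' w; pose h u := \sum_(f <- q) (if freduce (u ++ f.2) == w then f.1 else 0).
suff lcoefE r : lcoef (lmul r q) w = lpair r h by rewrite !lcoefE; apply: lpair_cong.
rewrite lcoef_mul /lpair; apply: eq_bigr => e _.
rewrite /h big_distrr /=; apply: eq_bigr => f _.
by rewrite -freduce_catl; case: ifP; rewrite ?mulr0.
Qed.

Lemma lmul_congr p q q' : leq_lp q q' -> leq_lp (lmul p q) (lmul p q').
Proof.
move=> qq' w; pose h u := \sum_(e <- p) (if freduce (e.2 ++ u) == w then e.1 else 0).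
suff lcoefE r : lcoef (lmul p r) w = lpair r h by rewrite !lcoefE; apply: lpair_cong.
rewrite lcoef_mul exchange_big /lpair; apply: eq_bigr => f _; rewrite /h big_distrr /=.
by apply: eq_bigr => e _; rewrite -freduce_catr; case: ifP; rewrite ?mulr0 // mulrC.
Qed.

End Coefficients.

#[global] Instance leq_lp_Equivalence : Equivalence leq_lp.
Proof. by split=> [p w|p q pq w|p q r pq qr w]; rewrite ?pq ?qr. Qed.

#[global] Instance ladd_Proper : Proper (leq_lp ==> leq_lp ==> leq_lp) ladd.
Proof. by move=> p p' pp' q q' qq' w; rewrite !lcoef_add pp' qq'. Qed.

#[global] Instance lmul_Proper : Proper (leq_lp ==> leq_lp ==> leq_lp) lmul.
Proof.
by move=> p p' pp' q q' qq'; rewrite -> (lmul_congl q pp'), (lmul_congr p' qq').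
Qed.

#[global] Instance lneg_Proper : Proper (leq_lp ==> leq_lp) lneg.
Proof. by move=> p p' pp' w; rewrite !lcoef_neg pp'. Qed.

Section RingLaws.
Local Open Scope ring_scope.

Lemma lmul_cons e p q :
  lmul (e :: p) q = [seq (e.1 * f.1, e.2 ++ f.2) | f <- q] ++ lmul p q.
Proof. by []. Qed.

Lemma lmulDl p q r : lmul (ladd p q) r = ladd (lmul p r) (lmul q r).
Proof. by elim: p => [|e p IH] //=; rewrite !lmul_cons IH catA. Qed.

Lemma lmulDr p q r : leq_lp (lmul p (ladd q r)) (ladd (lmul p q) (lmul p r)).
Proof.
move=> w; rewrite lcoef_add !lcoef_mul -big_split; apply: eq_bigr => e _.
by rewrite big_cat.
Qed.

Lemma lmulA p q r : lmul (lmul p q) r = lmul p (lmul q r).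
Proof.
elim: p => [|e p IH] //; rewrite !lmul_cons lmulDl IH; congr (_ ++ _).
clear IH; elim: q => [|f q IHq] //; rewrite map_cons !lmul_cons IHq map_cat -map_comp.
by congr (_ ++ _); apply: eq_map => g /=; rewrite mulrA catA.
Qed.

Lemma lmulNl p q : lmul (lneg p) q = lneg (lmul p q).
Proof.
elim: p => [|e p IH] //; rewrite /lneg /= lmul_cons -/(lneg p) IH /lneg map_cat -map_comp.
by congr (_ ++ _); apply: eq_map => f /=; rewrite mulNr.
Qed.

Lemma lmulNr p q : lmul p (lneg q) = lneg (lmul p q).
Proof.
elim: p => [|e p IH] //; rewrite !lmul_cons IH /lneg map_cat -!map_comp.
by congr (_ ++ _); apply: eq_map => f /=; rewrite mulrN.
Qed.

Lemma lmul1l p : lmul lone p = p.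
Proof. by rewrite lmul_cons cats0; elim: p => [|[c u] p IH] //=; rewrite IH mul1r. Qed.

Lemma lmul1r p : lmul p lone = p.
Proof. by elim: p => [|[c u] p IH] //=; rewrite lmul_cons IH /= mulr1 cats0. Qed.

Lemma lnegD p q : lneg (ladd p q) = ladd (lneg p) (lneg q).
Proof. exact: map_cat. Qed.

Lemma lnegK p : lneg (lneg p) = p.
Proof. by elim: p => [|[c u] p IH] //=; rewrite -/(lneg p) IH opprK. Qed.

End RingLaws.

Ltac lsimp := repeat progress
  rewrite ?lmulA ?lmulDl ?lmulNl ?lmulNr ?lnegD ?lnegK ?lmul1l ?lmul1r ?lmulDr.
Ltac lsimp_in H := repeat progress
  rewrite ?lmulA ?lmulDl ?lmulNl ?lmulNr ?lnegD ?lnegK ?lmul1l ?lmul1r ?lmulDr in H.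

(* Once all sides are sums of signed products of atoms, compare coefficients
   at an arbitrary word: the goal becomes a linear identity over [int]. *)
Ltac lcoef_lia := let w := fresh "w" in move=> w;
  repeat match goal with H : leq_lp _ _ |- _ => move: (H w); clear H end;
  rewrite ?lcoef_add ?lcoef_neg; lia.

Section QuadraticRecurrence.
Variables (K C E : lpoly) (r : nat -> lpoly).
Hypotheses (CE : leq_lp (lmul C E) lone) (EC : leq_lp (lmul E C) lone).
Hypothesis r_linear :
  forall n, leq_lp (r n.+2) (ladd (lmul (r n.+1) K) (lneg (lmul (r n) E))).

Definition exchange1 n :=
  leq_lp (ladd (lmul K (lmul C (r n.+1))) (lmul (r n) E))
         (ladd (lmul (r n.+1) K) (lmul C (r n))).
Definition exchange2 n :=
  leq_lp (ladd (lmul K (lmul C (r n))) (lmul C (lmul (r n.+1) C)))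
         (ladd (r n.+1) (lmul C (lmul (r n) (lmul K C)))).
Definition quadratic_rec n :=
  leq_lp (lmul (lmul (r n.+2) C) (r n)) (ladd (lmul (r n.+1) (r n.+1)) lone).

Lemma CEl p : leq_lp (lmul C (lmul E p)) p.
Proof. by rewrite -lmulA CE lmul1l. Qed.

Lemma ECl p : leq_lp (lmul E (lmul C p)) p.
Proof. by rewrite -lmulA EC lmul1l. Qed.

Ltac lsimpCE :=
  repeat first [rewrite CEl | rewrite ECl | rewrite CE | rewrite EC | progress lsimp].
Ltac lsimpCE_in H :=
  repeat first [rewrite CEl in H | rewrite ECl in H | rewrite CE in H | rewrite EC in H
               | progress lsimp_in H].

Lemma exchange2_succ n : exchange1 n -> exchange2 n.+1.
Proof.
by rewrite /exchange1 /exchange2 (r_linear n) => ex1; lsimpCE; lsimpCE_in ex1; lcoef_lia.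
Qed.

Lemma exchange1_succ n : exchange1 n -> exchange2 n -> exchange1 n.+1.
Proof.
rewrite /exchange1 /exchange2 => /(lmul_congl K) ex1 /(lmul_congl E) ex2.
rewrite (r_linear n); lsimpCE; lsimpCE_in ex1; lsimpCE_in ex2; lcoef_lia.
Qed.

Lemma quadratic_rec_succ n : exchange1 n -> quadratic_rec n -> quadratic_rec n.+1.
Proof.
rewrite /exchange1 /quadratic_rec => /(lmul_congr (r n.+2)) ex1 rec.
have lin := lmul_congr (r n.+2) (r_linear n).
rewrite (r_linear n.+1); lsimpCE.
by lsimpCE_in ex1; lsimpCE_in lin; lsimpCE_in rec; lcoef_lia.
Qed.

Lemma quadratic_rec_all :
  exchange1 0 -> exchange2 0 -> quadratic_rec 0 -> forall n, quadratic_rec n.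
Proof.
move=> ex1 ex2 rec n; suff: [/\ exchange1 n, exchange2 n & quadratic_rec n] by case.
elim: n => [|n [ex1n ex2n recn]]; first by [].
by split; [apply: exchange1_succ | apply: exchange2_succ | apply: quadratic_rec_succ].
Qed.

End QuadraticRecurrence.

Definition YXi : lpoly := lword [:: Y; Xi].
Definition XXYiXi : lpoly := lword [:: X; X; Yi; Xi].
Definition YiXi : lpoly := lword [:: Yi; Xi].

Fixpoint transfer (n : nat) : lpoly * lpoly :=
  if n is m.+1 then
    let: (r, z) := transfer m in
    let r' := ladd (lmul r YXi) z in (r', ladd (lmul z XXYiXi) (lmul r' YiXi))
  else (lword [:: Y; X; Yi], [::]).

Definition R (n : nat) : lpoly := (transfer n).1.
Definition Kw : lpoly := ladd YXi (ladd XXYiXi YiXi).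
Definition Ew : lpoly := lmul YXi XXYiXi.

Lemma R_linear n : leq_lp (R n.+2) (ladd (lmul (R n.+1) Kw) (lneg (lmul (R n) Ew))).
Proof.
rewrite /R /=; case: (transfer n) => r z /=; rewrite /Kw /Ew.
move: YXi XXYiXi YiXi => a b c; lsimp; lcoef_lia.
Qed.

Section Decision.
Local Open Scope ring_scope.

(* [lcoef] unfolds through a locked big operator, so [vm_compute] needs this
   transparent copy. *)
Definition lcoef_fold (p : lpoly) (u : word) : int :=
  foldr (fun e acc => (if freduce e.2 == u then e.1 else 0) + acc) 0 p.

Lemma lcoef_foldE p u : lcoef p u = lcoef_fold p u.
Proof. by elim: p => [|e p IH]; rewrite ?lcoef_nil ?lcoef_cons ?IH. Qed.

Definition lp_eqb (p q : lpoly) : bool :=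
  all (fun u => lcoef_fold p u == lcoef_fold q u) [seq freduce e.2 | e <- p ++ q].

Lemma lcoef_eq0 p w : w \notin [seq freduce e.2 | e <- p] -> lcoef p w = 0.
Proof.
move=> w_p; rewrite /lcoef big1_seq // => e /andP[/eqP ew e_p].
by rewrite -ew (map_f (fun e : int * word => freduce e.2) e_p) in w_p.
Qed.

Lemma lp_eqb_sound p q : lp_eqb p q -> leq_lp p q.
Proof.
move=> /allP pq w; case: (boolP (w \in [seq freduce e.2 | e <- p ++ q])) => w_pq.
  by rewrite !lcoef_foldE; apply/eqP/pq.
by move: w_pq; rewrite map_cat mem_cat negb_or => /andP[w_p w_q]; rewrite !lcoef_eq0.
Qed.

End Decision.

Section Positivity.
Local Open Scope ring_scope.

Definition nonneg_terms (p : lpoly) : bool := all (fun e => 0 <= e.1) p.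

Lemma nonneg_terms_add p q :
  nonneg_terms p -> nonneg_terms q -> nonneg_terms (ladd p q).
Proof. by rewrite /nonneg_terms /ladd all_cat => -> ->. Qed.

Lemma nonneg_terms_mul p q :
  nonneg_terms p -> nonneg_terms q -> nonneg_terms (lmul p q).
Proof.
move=> /allP p_ge0 /allP q_ge0; apply/allP => _ /allpairsP[[e f] [e_p f_q ->]].
exact: mulr_ge0 (p_ge0 e e_p) (q_ge0 f f_q).
Qed.

Lemma nonneg_terms_lp p : nonneg_terms p -> nonneg_lp p.
Proof.
move=> /allP p_ge0 w; rewrite /lcoef big_seq_cond sumr_ge0 // => e /andP[e_p _].
exact: p_ge0.
Qed.

Lemma transfer_nonneg n : nonneg_terms (transfer n).1 && nonneg_terms (transfer n).2.
Proof.
elim: n => [|n] //=; case: (transfer n) => r z /andP[r_ge0 z_ge0] /=.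
have r'_ge0 : nonneg_terms (ladd (lmul r YXi) z).
  by apply: nonneg_terms_add => //; apply: nonneg_terms_mul.
by rewrite r'_ge0 nonneg_terms_add ?nonneg_terms_mul.
Qed.

End Positivity.

Theorem corollary3p4 :
  exists P : nat -> lpoly,
    [/\ leq_lp (P 0%N) (lword [:: Y; X; Yi]),
        leq_lp (P 1%N) (lword [:: Y]),
        (forall n : nat,
           leq_lp (lmul (lmul (P n.+2) Cw) (P n))
                  (ladd (lmul (P n.+1) (P n.+1)) lone))
      & (forall n : nat, nonneg_lp (P n))].
Proof.
exists R; split.
- by [].
- by apply: lp_eqb_sound; vm_compute.
- apply: (@quadratic_rec_all Kw Cw Ew); try exact: R_linear;
    by apply: lp_eqb_sound; vm_compute.
- by move=> n; apply: nonneg_terms_lp; case/andP: (transfer_nonneg n).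
Qed.
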